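(* Let $A=\bigoplus_iA^i$ be a graded commutative algebra with unit $1\in A^0$ over a field $\mathbb{K}$ of characteristic $0$, fix an integer $k$, and let $f\in\operatorname{Hom}^*_{\mathbb{K}}(A,A)$ be homogeneous. The following are equivalent: (1) $f\in\operatorname{Diff}_2(A)$ and $f(1)=0$; (2) for all homogeneous $a,b,c\in A$, \[f(abc)+f(a)bc+(-1)^{\bar a\bar b}f(b)ac+(-1)^{\bar c(\bar a+\bar b)}f(c)ab=f(ab)c+(-1)^{\bar a(\bar b+\bar c)}f(bc)a+(-1)^{\bar b\bar c}f(ac)b;\] (3) the bilinear map $\Phi(a,b)=f(ab)-f(a)b-(-1)^{\bar a\bar f}af(b)$ satisfies $\Phi(a,bc)=\Phi(a,b)c+(-1)^{(\bar a+\bar f)\bar b}b\Phi(a,c)$ for all homogeneous $a,b,c$; (4) $[f,\mu_2]=[[f,\mu_1],\mu_1]$ in $D(A[2k])$.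
   Context: $\bar a$ denotes degree. Elements $a\in A$ act on $A$ by left multiplication, and $[\,,\,]$ is the graded commutator on $\operatorname{Hom}^*_{\mathbb{K}}(A,A)$. Differential operators of order $\le k$: $\operatorname{Diff}_k(A)=0$ for $k<0$ and, for $k\ge0$, $\operatorname{Diff}_k(A)=\{f\in\operatorname{Hom}^*_{\mathbb{K}}(A,A)\mid [f,a]\in\operatorname{Diff}_{k-1}(A)\ \forall a\in A\}$. For a graded vector space $V$, $V[2k]^i=V^{i+2k}$; $D(V)=\prod_{i\ge0}D_i(V)$ with $D_i(V)=\operatorname{Hom}^*_{\mathbb{K}}(\bigodot^{i+1}V,V)$, with the graded Lie bracket $[f,g]=f\bullet g-(-1)^{\bar f\bar g}g\bullet f$ for $f\in D_n(V),g\in D_m(V)$, where $f\bullet g(a_0,\dots,a_{n+m})=\sum_\sigma\varepsilon(\sigma)f(g(a_{\sigma(0)},\dots,a_{\sigma(m)}),a_{\sigma(m+1)},\dots,a_{\sigma(n+m)})$ over $(m+1,n)$-unshuffles with Koszul sign. $\operatorname{Hom}^*_{\mathbb{K}}(A,A)$ is identified with $D_0(A[2k])$, and $\mu_n\in D_n(A[2k])$ (degree $2kn$) is the multiplication $\mu_n(a_0\odot\cdots\odot a_n)=a_0\cdots a_n$. A map satisfying these equivalent conditions is called a quasi-Batalin–Vilkovisky (quasi-BV) operator. *)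

From mathcomp Require Import all_boot all_order all_algebra.
Set Implicit Arguments. Unset Strict Implicit. Unset Printing Implicit Defensive.
Import GRing.Theory.
Local Open Scope ring_scope.

Section GradedDefs.
Variables (K : fieldType) (A : algType K).

Definition eps (n : int) : K := if odd `|n|%N then -1 else 1.

(* A graded commutative unital K-algebra: G i is the homogeneous component A^i,
   A = \bigoplus_i A^i (spanning + independence), A^i A^j ⊆ A^(i+j), 1 ∈ A^0,
   ab = (-1)^{ij} ba for a ∈ A^i, b ∈ A^j. *)
Record graded_comm_alg (G : int -> A -> Prop) : Prop := GradedCommAlg {
  gr_zero : forall i, G i 0;
  gr_add : forall i a b, G i a -> G i b -> G i (a + b);
  gr_scale : forall i (c : K) a, G i a -> G i (c *: a);
  gr_one : G 0 1;
  gr_mul : forall i j a b, G i a -> G j b -> G (i + j) (a * b);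
  gr_comm : forall i j a b, G i a -> G j b -> a * b = eps (i * j) *: (b * a);
  gr_span : forall a, exists (s : seq int) (c : int -> A),
      (forall i, G i (c i)) /\ a = \sum_(i <- s) c i;
  gr_indep : forall (s : seq int) (c : int -> A), uniq s ->
      (forall i, G i (c i)) -> \sum_(i <- s) c i = 0 ->
      forall i, i \in s -> c i = 0 }.

Variable G : int -> A -> Prop.

Definition homog_op (d : int) (f : A -> A) : Prop :=
  forall i a, G i a -> G (i + d) (f a).

Definition gcomm (d i : int) (f : A -> A) (a : A) : A -> A :=
  fun x => f (a * x) - eps (d * i) *: (a * f x).

(* Diff k d f : the degree-d operator f lies in Diff_k(A)
   (Diff_{-1} = 0; [f,a] ∈ Diff_{k-1} for all homogeneous a) *)
Fixpoint Diff (k : nat) (d : int) (f : A -> A) : Prop :=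
  match k with
  | 0 => forall i a, G i a -> forall x, gcomm d i f a x = 0
  | k'.+1 => forall i a, G i a -> Diff k' (d + i) (gcomm d i f a)
  end.

Definition Phi (f : A -> A) (d i : int) (a b : A) : A :=
  f (a * b) - f a * b - eps (i * d) *: (a * f b).

(* Graded symmetric multilinear maps on V = A[2k], evaluated on lists of
   homogeneous arguments tagged with their degree in V. *)
Definition hop := seq (int * A) -> A.

(* bit masks of length L with exactly t trues: (t, L-t)-unshuffles *)
Fixpoint masks (L t : nat) : seq bitseq :=
  match L with
  | 0 => if t == 0%N then [:: [::]] else [::]
  | L'.+1 =>
      [seq true :: b | b <- match t with 0 => [::] | t'.+1 => masks L' t' end]
      ++ [seq false :: b | b <- masks L' t]
  end.

(* Koszul sign of the unshuffle moving the selected entries to the front;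
   acc = total degree of the unselected entries seen so far *)
Fixpoint kz (acc : int) (b : bitseq) (xs : seq (int * A)) : K :=
  match b, xs with
  | true :: b', x :: xs' => eps (acc * x.1) * kz acc b' xs'
  | false :: b', x :: xs' => kz (acc + x.1) b' xs'
  | _, _ => 1
  end.

Definition sumdeg (xs : seq (int * A)) : int := \sum_(x <- xs) x.1.

Definition bullet (f g : hop) (dg : int) (m : nat) : hop := fun xs =>
  \sum_(b <- masks (size xs) m.+1)
     kz 0 b xs *: f ((dg + sumdeg (mask b xs), g (mask b xs))
                       :: mask (map negb b) xs).

Definition gbr (f : hop) (df : int) (n : nat) (g : hop) (dg : int) (m : nat) : hop :=
  fun xs => bullet f g dg m xs - eps (df * dg) *: bullet g f df n xs.

(* Hom^*(A,A) identified with D_0(A[2k]) *)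
Definition op0 (f : A -> A) : hop := fun xs => if xs is [:: x] then f x.2 else 0.

(* mu_n(a_0 ⊙ ... ⊙ a_n) = a_0 ... a_n (used with n+1 arguments) *)
Definition mu : hop := fun xs => \prod_(x <- xs) x.2.

End GradedDefs.

From mathcomp Require Import all_boot all_order all_algebra zify ring.
Set Implicit Arguments. Unset Strict Implicit. Unset Printing Implicit Defensive.
Import GRing.Theory.
Local Open Scope ring_scope.

(* Conditions (2), (3) and (4) all say that one expression vanishes: the difference
   of the two sides of (2), called [seven_term].  It is the defect of Phi(a, _) from
   being a graded derivation, -1/2 times [f, mu_2] - [[f, mu_1], mu_1] evaluated at
   (a, b, c), and, when f 1 = 0, the triple commutator [[[f, a], b], c] evaluated
   at 1; at a = b = c = 1 it is f 1 itself.  Finally Diff_2 only needs the triple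
   commutators at 1: [g, c](x) = [g, c x](1) - ± c [g, x](1), and all the
   commutators are additive, so the homogeneous decomposition of A does the rest. *)

Lemma odd_abszD (m n : int) : odd `|m + n| = odd `|m| (+) odd `|n|.
Proof.
have odd_mod2 (x : nat) : odd x = (x %% 2 == 1)%N by rewrite modn2; case: (odd x).
by rewrite !odd_mod2; do 3 case: eqP => /=; lia.
Qed.

Lemma odd_abszM (m n : int) : odd `|m * n| = odd `|m| && odd `|n|.
Proof. by rewrite abszM oddM. Qed.

Section LinearCombination.
Variables (K : fieldType) (V : lmodType K) (X : seq V).

Definition lincomb (p : {poly K}) : V := \sum_(i < size X) p`_i *: X`_i.

Lemma lincombD p q : lincomb p + lincomb q = lincomb (p + q).
Proof. by rewrite /lincomb -big_split; apply: eq_bigr => i _; rewrite coefD scalerDl. Qed.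

Lemma lincombN p : - lincomb p = lincomb (- p).
Proof. by rewrite /lincomb -sumrN; apply: eq_bigr => i _; rewrite coefN scaleNr. Qed.

Lemma lincombMn p n : lincomb p *+ n = lincomb (p *+ n).
Proof. by rewrite /lincomb -sumrMnl; apply: eq_bigr => i _; rewrite coefMn scalerMnl. Qed.

Lemma lincombZ c p : c *: lincomb p = lincomb (c%:P * p).
Proof. by rewrite /lincomb scaler_sumr; apply: eq_bigr => i _; rewrite coefCM scalerA. Qed.

Lemma lincombXn n : (n < size X)%N -> X`_n = lincomb 'X^n.
Proof.
move=> ltnX; rewrite /lincomb (bigD1 (Ordinal ltnX)) //= coefXn eqxx scale1r.
rewrite big1 ?addr0 // => j neq_jn.
by have /negbTE neq_jn' : (j : nat) != n := neq_jn; rewrite coefXn neq_jn' scale0r.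
Qed.

End LinearCombination.

Ltac sign_simpl :=
  rewrite /eps ?(odd_abszM, odd_abszD) /= ?(andbF, andFb, addbF, addFb) /=
          ?(scale1r, mul1r).

Ltac lincomb_atoms X atoms n :=
  lazymatch atoms with
  | ?t :: ?atoms' =>
      rewrite [t](lincombXn (X := X) (n := n) isT); lincomb_atoms X atoms' n.+1
  | nil => idtac
  end.

(* [ring] does not apply in the noncommutative algebra, so a linear identity among
   the atoms is moved to {poly K}, each atom being the coefficient of its own
   monomial; the Koszul signs are then split into their parity cases. *)
Ltac sign_solve atoms :=
  sign_simpl;
  let X := fresh "X" in
  pose X := atoms; lincomb_atoms X atoms 0%N;
  do ![rewrite lincombD | rewrite lincombN | rewrite lincombZ | rewrite lincombMn
      | rewrite scalerA];
  apply: (congr1 (lincomb X));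
  repeat match goal with |- context [odd ?n] => case: (odd n) end;
  rewrite /= ?(rmorphN, rmorph1, rmorphM); ring.

Ltac distribute :=
  do ![rewrite (mulrBl, mulrBr, mulrDl, mulrDr, mulNr, mulrN, scalerDr, scalerBr,
                scalerN, scalerA, mulrA)
      | rewrite -scalerAl | rewrite -scalerAr].

Lemma mulrn_eq0_pchar0 (K : fieldType) (V : lmodType K) (v : V) n :
  [pchar K] =i pred0 -> (v *+ n == 0) = (n == 0%N) || (v == 0).
Proof. by move=> charK0; rewrite -scaler_nat scaler_eq0 (pcharf0P K).1. Qed.

Section GradedCommutator.
Variables (K : fieldType) (A : algType K).

Lemma gcommD D i (g : A -> A) a :
  {morph g : x y / x + y} -> {morph gcomm D i g a : x y / x + y}.
Proof. by move=> gD x y; rewrite /gcomm mulrDr !gD mulrDr scalerDr opprD addrACA. Qed.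

Lemma gcomm_one_split D l m (g : A -> A) c x :
  gcomm D l g c x = gcomm D (l + m) g (c * x) 1 - eps K (D * l) *: (c * gcomm D m g x 1).
Proof.
rewrite /gcomm !mulr1; sign_simpl; distribute.
sign_solve [:: g (c * x); c * g x; c * x * g 1].
Qed.

End GradedCommutator.

Section Graded.
Variables (K : fieldType) (A : algType K) (G : int -> A -> Prop).
Hypothesis hG : graded_comm_alg G.
Variables (d : int) (f : {linear A -> A}).
Hypothesis hf : homog_op G d f.

Lemma mulr_gr_comm u i j x y : G i x -> G j y ->
  u * x * y = eps K (i * j) *: (u * y * x).
Proof. by move=> hx hy; rewrite -mulrA (gr_comm hG hx hy) -scalerAr mulrA. Qed.

Definition seven_term (i j l : int) (a b c : A) : A :=
  f (a * b * c) + f a * b * c + eps K (i * j) *: (f b * a * c)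
    + eps K (l * (i + j)) *: (f c * a * b)
  - (f (a * b) * c + eps K (i * (j + l)) *: (f (b * c) * a)
    + eps K (j * l) *: (f (a * c) * b)).

Lemma seven_term_eq0P i j l a b c :
  seven_term i j l a b c = 0 <->
  f (a * b * c) + f a * b * c + eps K (i * j) *: (f b * a * c)
    + eps K (l * (i + j)) *: (f c * a * b)
  = f (a * b) * c + eps K (i * (j + l)) *: (f (b * c) * a)
    + eps K (j * l) *: (f (a * c) * b).
Proof. by rewrite /seven_term; split=> [/subr0_eq | ->]; rewrite ?subrr. Qed.

Lemma seven_term_one : seven_term 0 0 0 1 1 1 = f 1.
Proof. by rewrite /seven_term !mulr1; sign_solve [:: f 1]. Qed.

Lemma gcomm3_one i j l a b c : f 1 = 0 -> G i a -> G j b -> G l c ->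
  gcomm (d + i + j) l (gcomm (d + i) j (gcomm d i f a) b) c 1 = seven_term i j l a b c.
Proof.
move=> f1 ha hb hc.
have a_fbc := gr_comm hG ha (hf (gr_mul hG hb hc)).
have b_fac := gr_comm hG hb (hf (gr_mul hG ha hc)).
have ba_fc := gr_comm hG (gr_mul hG hb ha) (hf hc).
have ba := gr_comm hG hb ha.
have c_fab := gr_comm hG hc (hf (gr_mul hG ha hb)).
have ca_fb := gr_comm hG (gr_mul hG hc ha) (hf hb).
have ca := gr_comm hG hc ha.
have cb_fa := gr_comm hG (gr_mul hG hc hb) (hf ha).
have cb := gr_comm hG hc hb.
rewrite /gcomm !mulr1 f1 mulr0 scaler0 subr0; sign_simpl; distribute.
rewrite a_fbc b_fac ba_fc c_fab ca_fb cb_fa ba ca cb; distribute.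
rewrite /seven_term; sign_solve
  [:: f (a * b * c); f a * b * c; f b * a * c; f c * a * b; f (a * b) * c;
      f (b * c) * a; f (a * c) * b].
Qed.

Lemma Phi_derivation_defect i j l a b c : G i a -> G j b -> G l c ->
  Phi f d i a (b * c) - (Phi f d i a b * c + eps K ((i + d) * j) *: (b * Phi f d i a c))
  = seven_term i j l a b c.
Proof.
move=> ha hb hc.
have a_fbc := gr_comm hG ha (hf (gr_mul hG hb hc)).
have a_fb := gr_comm hG ha (hf hb).
have b_fac := gr_comm hG hb (hf (gr_mul hG ha hc)).
have b_fa := gr_comm hG hb (hf ha).
have ba_fc := gr_comm hG (gr_mul hG hb ha) (hf hc).
have ba := gr_comm hG hb ha.
rewrite /Phi; sign_simpl; distribute.
rewrite a_fbc a_fb ba_fc ba b_fac b_fa; distribute.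
rewrite /seven_term; sign_solve
  [:: f (a * b * c); f a * b * c; f b * a * c; f c * a * b; f (a * b) * c;
      f (b * c) * a; f (a * c) * b].
Qed.

Lemma bracket_mu_defect k x y z :
  G (x.1 + 2 * k) x.2 -> G (y.1 + 2 * k) y.2 -> G (z.1 + 2 * k) z.2 ->
  gbr (op0 f) d 0 (@mu K A) (2 * k * 2) 2 [:: x; y; z]
  - gbr (gbr (op0 f) d 0 (@mu K A) (2 * k) 1) (d + 2 * k) 1 (@mu K A) (2 * k) 1
        [:: x; y; z]
  = - seven_term (x.1 + 2 * k) (y.1 + 2 * k) (z.1 + 2 * k) x.2 y.2 z.2 *+ 2.
Proof.
move: x y z => [x1 a] [y1 b] [z1 c] /= ha hb hc.
rewrite /gbr /bullet /= !big_cons !big_nil /= /mu /sumdeg /= !big_cons !big_nil /=.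
rewrite !mulr1 !mul0r !add0r !addr0 !mulrA; sign_simpl; distribute.
have bca := gr_comm hG (gr_mul hG hb hc) ha; rewrite mulrA in bca.
rewrite (mulr_gr_comm a hc hb) bca (mulr_gr_comm (f a) hc hb).
rewrite (mulr_gr_comm (f b) hc ha) (mulr_gr_comm (f c) hb ha) !linearZ /=.
rewrite /seven_term; sign_solve
  [:: f (a * b * c); f a * b * c; f b * a * c; f c * a * b; f (a * b) * c;
      f (b * c) * a; f (a * c) * b].
Qed.

Lemma seven_term_eq0_bracket k : [pchar K] =i pred0 ->
  (forall x y z : int * A,
     G (x.1 + 2 * k) x.2 -> G (y.1 + 2 * k) y.2 -> G (z.1 + 2 * k) z.2 ->
     gbr (op0 f) d 0 (@mu K A) (2 * k * 2) 2 [:: x; y; z]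
     = gbr (gbr (op0 f) d 0 (@mu K A) (2 * k) 1) (d + 2 * k) 1 (@mu K A) (2 * k) 1
           [:: x; y; z]) ->
  forall i j l a b c, G i a -> G j b -> G l c -> seven_term i j l a b c = 0.
Proof.
move=> charK0 bracket_eq i j l a b c ha hb hc.
have shift u v : G u v -> G ((u - 2 * k, v).1 + 2 * k) (u - 2 * k, v).2.
  by rewrite /= subrK.
move: (shift _ _ ha) (shift _ _ hb) (shift _ _ hc) => ha' hb' hc'.
have := bracket_mu_defect ha' hb' hc'.
rewrite bracket_eq // subrr /= !subrK => /esym/eqP.
by rewrite mulNrn oppr_eq0 mulrn_eq0_pchar0 // => /eqP.
Qed.

Lemma Diff2_gcomm3_one :
  (forall i j l a b c, G i a -> G j b -> G l c ->
     gcomm (d + i + j) l (gcomm (d + i) j (gcomm d i f a) b) c 1 = 0) ->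
  Diff G 2 d f.
Proof.
move=> gcomm3_0 i a ha j b hb l c hc x.
set g := gcomm (d + i) j (gcomm d i f a) b.
have gD : {morph g : u v / u + v} by do 2 apply: gcommD; exact: linearD.
have gcD := gcommD (d + i + j) l c gD.
have gc0 : gcomm (d + i + j) l g c 0 = 0.
  by apply: (addrI (gcomm (d + i + j) l g c 0)); rewrite -gcD !addr0.
have [s [x_ [hx ->]]] := gr_span hG x.
rewrite (big_morph _ gcD gc0) big1 // => m _.
have hcx := gr_mul hG hc (hx m).
by rewrite (gcomm_one_split _ _ m) !gcomm3_0 // mulr0 scaler0 subr0.
Qed.

End Graded.

Theorem theorem3p3 (K : fieldType) (A : algType K) (G : int -> A -> Prop)
    (k d : int) (f : {linear A -> A}) :
  [pchar K] =i pred0 -> graded_comm_alg G -> homog_op G d f ->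
  [<-> Diff G 2 d f /\ f 1 = 0;
       forall (i j l : int) (a b c : A), G i a -> G j b -> G l c ->
         f (a * b * c) + f a * b * c + eps K (i * j) *: (f b * a * c)
           + eps K (l * (i + j)) *: (f c * a * b)
         = f (a * b) * c + eps K (i * (j + l)) *: (f (b * c) * a)
           + eps K (j * l) *: (f (a * c) * b);
       forall (i j l : int) (a b c : A), G i a -> G j b -> G l c ->
         Phi f d i a (b * c)
         = Phi f d i a b * c + eps K ((i + d) * j) *: (b * Phi f d i a c);
       forall x y z : int * A,
         G (x.1 + 2 * k) x.2 -> G (y.1 + 2 * k) y.2 -> G (z.1 + 2 * k) z.2 ->
         gbr (op0 f) d 0 (@mu K A) (2 * k * 2) 2 [:: x; y; z]
         = gbr (gbr (op0 f) d 0 (@mu K A) (2 * k) 1) (d + 2 * k) 1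
               (@mu K A) (2 * k) 1 [:: x; y; z]].
Proof.
move=> charK0 hG hf.
tfae=> [[Df f1] i j l a b c ha hb hc | seven0 i j l a b c ha hb hc
       | Phi_der x y z hx hy hz | bracket_eq].
- by apply/seven_term_eq0P; rewrite -(gcomm3_one hG hf f1 ha hb hc); apply: Df.
- apply/subr0_eq; rewrite (Phi_derivation_defect hG hf ha hb hc).
  by apply/seven_term_eq0P/seven0.
- apply/subr0_eq; rewrite (bracket_mu_defect hG) //.
  rewrite -(Phi_derivation_defect hG hf hx hy hz) (Phi_der _ _ _ _ _ _ hx hy hz).
  by rewrite subrr oppr0 mul0rn.
- have seven_term0 := seven_term_eq0_bracket hG charK0 bracket_eq.
  have f1 : f 1 = 0 by rewrite -seven_term_one; apply: seven_term0; apply: gr_one.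
  split=> //; apply: (Diff2_gcomm3_one hG) => i j l a b c ha hb hc.
  by rewrite (gcomm3_one hG hf f1 ha hb hc); apply: seven_term0.
Qed.
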